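(* Under Assumptions 1 and 2, $(\mathcal C,\rho)$ is a complete metric space.
   Context: Fix $\beta>0$ and $R>0$. Assumption 1: $u:[0,\infty)\to\{-\infty\}\cup\mathbb R$ is twice continuously differentiable on $(0,\infty)$ with $u'>0$, $u''<0$, $\lim_{x\downarrow 0}u'(x)=\infty$, $\lim_{x\to\infty}u'(x)=0$. Assumption 2: $\{z_t\}_{t\ge0}$ is a Markov process on a set $Z$, $y:Z\to[0,\infty)$, income is $y_t=y(z_t)$, and $\sup_{z\in Z}E[y(z_{t+1})\mid z_t=z]<\infty$. $\mathcal C$ is the set of functions $c:(0,\infty)\times Z\to\mathbb R$ that are increasing in $a$, satisfy $0<c(a,z)\le a$, and satisfy $\sup_{(a,z)}|u'(c(a,z))-u'(a)|<\infty$. On $\mathcal C$ define $\rho(c,d)=\sup_{(a,z)}|u'(c(a,z))-u'(d(a,z))|$. *)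

From Stdlib Require Import Reals Lra Classical ClassicalEpsilon.
Open Scope R_scope.

(** The half-line (0,oo) as a subtype, so that policy functions are
    functions on (0,oo) x Z exactly (no junk values outside the domain). *)
Definition posR : Type := {a : R | 0 < a}.
Definition pval (a : posR) : R := proj1_sig a.

Definition Assumption1 (u u' u'' : R -> R) : Prop :=
  (forall x, 0 < x -> derivable_pt_lim u x (u' x)) /\
  (forall x, 0 < x -> derivable_pt_lim u' x (u'' x)) /\
  (forall x, 0 < x -> continuity_pt u'' x) /\
  (forall x, 0 < x -> 0 < u' x) /\
  (forall x, 0 < x -> u'' x < 0) /\
  (forall M, exists delta, 0 < delta /\ forall x, 0 < x < delta -> M < u' x) /\
  (forall eps, 0 < eps -> exists K, forall x, K < x -> Rabs (u' x) < eps).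

Definition in_C {Z : Type} (u' : R -> R) (c : posR -> Z -> R) : Prop :=
  (forall a1 a2 z, pval a1 <= pval a2 -> c a1 z <= c a2 z) /\
  (forall a z, 0 < c a z <= pval a) /\
  (exists M, forall a z, Rabs (u' (c a z) - u' (pval a)) <= M).

Definition rho_set {Z : Type} (u' : R -> R) (c d : posR -> Z -> R) : R -> Prop :=
  fun r => exists a z, r = Rabs (u' (c a z) - u' (d a z)).

(** rho(c,d) = sup of rho_set (the least upper bound when it exists;
    0 by convention otherwise, which never happens for c, d in C with Z
    nonempty, and gives sup of the empty set = 0 when Z is empty). *)
Definition rho {Z : Type} (u' : R -> R) (c d : posR -> Z -> R) : R :=
  match excluded_middle_informative
          (bound (rho_set u' c d) /\ exists r, rho_set u' c d r) with
  | left H => proj1_sig (completeness (rho_set u' c d) (proj1 H) (proj2 H))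
  | right _ => 0
  end.

Definition is_metric_space {X : Type} (S : X -> Prop) (dist : X -> X -> R) : Prop :=
  (forall x y, S x -> S y -> 0 <= dist x y) /\
  (forall x y, S x -> S y -> (dist x y = 0 <-> x = y)) /\
  (forall x y, S x -> S y -> dist x y = dist y x) /\
  (forall x y w, S x -> S y -> S w -> dist x w <= dist x y + dist y w).

Definition is_complete {X : Type} (S : X -> Prop) (dist : X -> X -> R) : Prop :=
  forall f : nat -> X,
    (forall n, S (f n)) ->
    (forall eps, 0 < eps -> exists N, forall m n, (N <= m)%nat -> (N <= n)%nat ->
        dist (f m) (f n) < eps) ->
    exists l, S l /\
      (forall eps, 0 < eps -> exists N, forall n, (N <= n)%nat -> dist (f n) l < eps).

Definition complete_metric_space {X : Type} (S : X -> Prop) (dist : X -> X -> R) : Prop :=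
  is_metric_space S dist /\ is_complete S dist.

(* Only two properties of u' matter: it is strictly decreasing on (0,oo), so
   rho, the sup-distance between u' o c and u' o d, separates points of C; and
   u'(0+) = oo.  A rho-Cauchy sequence c_n makes u'(c_n(a,z)) uniformly Cauchy,
   and its pointwise limit lies in [u'(a), oo) since c_n <= a; by intermediate
   values and u'(0+) = oo it equals u'(c(a,z)) for some c(a,z) in (0,a].
   Monotonicity in a and the bound on |u' o c - u'| survive the uniform limit,
   and uniform convergence of u' o c_n is exactly rho-convergence. *)
From Stdlib Require Import Reals Ranalysis5 Lra Lia ClassicalEpsilon FunctionalExtensionality.
Open Scope R_scope.

Section Marginal_utility.
Variables u' u'' : R -> R.
Hypothesis u'_deriv : forall x, 0 < x -> derivable_pt_lim u' x (u'' x).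
Hypothesis u''_neg : forall x, 0 < x -> u'' x < 0.
Hypothesis u'_blowup :
  forall M, exists delta, 0 < delta /\ forall x, 0 < x < delta -> M < u' x.

Lemma u'_decreasing x y : 0 < x -> x < y -> u' y < u' x.
Proof.
  intros hx hxy.
  destruct (MVT_cor2 u' u'' x y hxy) as [c [Hc Hc2]].
  { intros c Hc; apply u'_deriv; lra. }
  assert (u'' c < 0) by (apply u''_neg; lra).
  assert (u'' c * (y - x) < 0) by nra.
  lra.
Qed.

Lemma u'_nonincreasing x y : 0 < x -> x <= y -> u' y <= u' x.
Proof.
  intros hx [hxy | <-]; [left; apply u'_decreasing|]; lra.
Qed.

Lemma u'_le_inv x y : 0 < y -> u' y <= u' x -> x <= y.
Proof.
  intros hy h; destruct (Rle_dec x y) as [|hyx]; auto.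
  pose proof (u'_decreasing y x hy ltac:(lra)); lra.
Qed.

Lemma u'_inj x y : 0 < x -> 0 < y -> u' x = u' y -> x = y.
Proof.
  intros hx hy e; apply Rle_antisym; apply u'_le_inv; lra.
Qed.

Lemma u'_onto_above a L : 0 < a -> u' a <= L -> exists x, 0 < x <= a /\ u' x = L.
Proof.
  intros ha [hL | <-]; [|exists a; split; lra].
  destruct (u'_blowup L) as [d [hd Hd]].
  set (x0 := Rmin (d / 2) (a / 2)).
  assert (hx0 : 0 < x0 < d /\ x0 < a).
  { unfold x0; pose proof (Rmin_l (d / 2) (a / 2)); pose proof (Rmin_r (d / 2) (a / 2)).
    split; [split; [apply Rmin_glb_lt|]|]; lra. }
  assert (L < u' x0) by (apply Hd; lra).
  destruct (IVT_interv (fun x => L - u' x) x0 a) as [x [Hx HxL]]; simpl; try lra.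
  - intros b Hb. apply continuity_pt_minus; [apply continuity_pt_const; now intros ? ?|].
    apply derivable_continuous_pt. exists (u'' b). apply u'_deriv; lra.
  - exists x; split; lra.
Qed.

(* Since u' o s >= u'(a), the limit lies in the range of u' on (0,a]. *)
Lemma u'_limit_attained a (s : nat -> R) l :
  (forall n, 0 < s n <= a) -> Un_cv (fun n => u' (s n)) l ->
  exists x, 0 < x <= a /\ u' x = l.
Proof.
  intros hs hl.
  assert (ha : 0 < a) by (destruct (hs 0%nat); lra).
  apply u'_onto_above; [exact ha|].
  apply (Rle_cv_lim (Un := fun _ => u' a) (Vn := fun n => u' (s n))); [| |exact hl].
  - intro n; destruct (hs n); apply u'_nonincreasing; lra.
  - intros e he; exists 0%nat; intros; unfold Rdist; rewrite Rminus_diag, Rabs_R0; lra.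
Qed.
End Marginal_utility.

Lemma Rabs_sub_triang x y w : Rabs (x - w) <= Rabs (x - y) + Rabs (y - w).
Proof.
  replace (x - w) with ((x - y) + (y - w)) by ring; apply Rabs_triang.
Qed.

Lemma Un_cv_Rabs_le (s : nat -> R) l c e N :
  Un_cv s l -> (forall m, (N <= m)%nat -> Rabs (c - s m) <= e) -> Rabs (c - l) <= e.
Proof.
  intros hs hb.
  destruct (Rle_dec (Rabs (c - l)) e) as [|he]; auto.
  destruct (hs (Rabs (c - l) - e)) as [N1 HN1]; [lra|].
  specialize (HN1 (max N N1) ltac:(lia)); unfold Rdist in HN1.
  specialize (hb (max N N1) ltac:(lia)).
  pose proof (Rabs_sub_triang c (s (max N N1)) l); lra.
Qed.

Section Sup_distance.
Variables (Z : Type) (u' : R -> R).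
Implicit Types c d w : posR -> Z -> R.

Lemma rho_le c d M : 0 <= M ->
  (forall a z, Rabs (u' (c a z) - u' (d a z)) <= M) -> rho u' c d <= M.
Proof.
  intros hM hb; unfold rho.
  destruct excluded_middle_informative as [h|h]; auto.
  destruct completeness as [m Hm]; simpl.
  apply (proj2 Hm); intros r [a [z ->]]; apply hb.
Qed.

Lemma rho_nonneg c d : 0 <= rho u' c d.
Proof.
  unfold rho.
  destruct excluded_middle_informative as [h|h]; [|lra].
  destruct completeness as [m Hm]; simpl.
  destruct h as [_ [r [a [z ->]]]].
  apply Rle_trans with (Rabs (u' (c a z) - u' (d a z))); [apply Rabs_pos|].
  apply (proj1 Hm); exists a, z; auto.
Qed.

Lemma rho_ge_bounded c d M :
  (forall a z, Rabs (u' (c a z) - u' (d a z)) <= M) ->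
  forall a z, Rabs (u' (c a z) - u' (d a z)) <= rho u' c d.
Proof.
  intros hb a z; unfold rho.
  destruct excluded_middle_informative as [h|h].
  - destruct completeness as [m Hm]; simpl.
    apply (proj1 Hm); exists a, z; auto.
  - exfalso; apply h; split.
    + exists M; intros r [a' [z' ->]]; apply hb.
    + exists (Rabs (u' (c a z) - u' (d a z))), a, z; auto.
Qed.

Lemma in_C_rho_ge c d : in_C u' c -> in_C u' d ->
  forall a z, Rabs (u' (c a z) - u' (d a z)) <= rho u' c d.
Proof.
  intros [_ [_ [M1 H1]]] [_ [_ [M2 H2]]].
  apply (rho_ge_bounded _ _ (M1 + M2)); intros a z.
  specialize (H1 a z); specialize (H2 a z); rewrite Rabs_minus_sym in H2.
  pose proof (Rabs_sub_triang (u' (c a z)) (u' (pval a)) (u' (d a z))); lra.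
Qed.

Lemma rho_refl c : rho u' c c = 0.
Proof.
  apply Rle_antisym; [|apply rho_nonneg].
  apply rho_le; [lra|]; intros; rewrite Rminus_diag, Rabs_R0; lra.
Qed.

Lemma rho_sym c d : in_C u' c -> in_C u' d -> rho u' c d = rho u' d c.
Proof.
  intros hc hd.
  apply Rle_antisym; apply rho_le; try apply rho_nonneg; intros a z;
    rewrite Rabs_minus_sym; apply in_C_rho_ge; auto.
Qed.

Lemma rho_triangle c d w : in_C u' c -> in_C u' d -> in_C u' w ->
  rho u' c w <= rho u' c d + rho u' d w.
Proof.
  intros hc hd hw.
  apply rho_le; [pose proof (rho_nonneg c d); pose proof (rho_nonneg d w); lra|].
  intros a z.
  pose proof (in_C_rho_ge c d hc hd a z); pose proof (in_C_rho_ge d w hd hw a z).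
  pose proof (Rabs_sub_triang (u' (c a z)) (u' (d a z)) (u' (w a z))); lra.
Qed.

Lemma rho_eq0 c d : (forall x y, 0 < x -> 0 < y -> u' x = u' y -> x = y) ->
  in_C u' c -> in_C u' d -> rho u' c d = 0 -> c = d.
Proof.
  intros hinj hc hd h0.
  apply functional_extensionality; intro a; apply functional_extensionality; intro z.
  pose proof (in_C_rho_ge c d hc hd a z) as hle; rewrite h0 in hle.
  destruct hc as [_ [hc _]], hd as [_ [hd _]].
  apply hinj; [apply hc|apply hd|apply cond_eq; intros; lra].
Qed.

Lemma in_C_rho_metric : (forall x y, 0 < x -> 0 < y -> u' x = u' y -> x = y) ->
  is_metric_space (@in_C Z u') (@rho Z u').
Proof.
  intros hinj; split; [|split; [|split]].
  - intros; apply rho_nonneg.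
  - intros c d hc hd; split; [now apply rho_eq0|intros ->; apply rho_refl].
  - exact rho_sym.
  - exact rho_triangle.
Qed.
End Sup_distance.

Section Cauchy_limit.
Variables (Z : Type) (u' u'' : R -> R).
Hypothesis u'_deriv : forall x, 0 < x -> derivable_pt_lim u' x (u'' x).
Hypothesis u''_neg : forall x, 0 < x -> u'' x < 0.
Hypothesis u'_blowup :
  forall M, exists delta, 0 < delta /\ forall x, 0 < x < delta -> M < u' x.

Variable f : nat -> posR -> Z -> R.
Hypothesis f_in_C : forall n, in_C u' (f n).
Hypothesis f_cauchy : forall eps, 0 < eps -> exists N, forall m n,
  (N <= m)%nat -> (N <= n)%nat -> rho u' (f m) (f n) < eps.

Lemma pointwise_limit_exists a z : exists x, 0 < x <= pval a /\
  Un_cv (fun n => u' (f n a z)) (u' x).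
Proof.
  assert (hC : Cauchy_crit (fun n => u' (f n a z))).
  { intros eps heps; destruct (f_cauchy eps heps) as [N HN].
    exists N; intros n m hn hm; unfold Rdist.
    eapply Rle_lt_trans; [apply in_C_rho_ge; apply f_in_C|now apply HN]. }
  destruct (R_complete _ hC) as [l hl].
  destruct (u'_limit_attained u' u'' u'_deriv u''_neg u'_blowup (pval a)
              (fun n => f n a z) l) as [x [hx <-]]; [|exact hl|now exists x].
  intro n; apply (f_in_C n).
Qed.

Definition pointwise_limit (a : posR) (z : Z) : R :=
  proj1_sig (constructive_indefinite_description _ (pointwise_limit_exists a z)).

Lemma pointwise_limitP a z : 0 < pointwise_limit a z <= pval a /\
  Un_cv (fun n => u' (f n a z)) (u' (pointwise_limit a z)).
Proof.
  unfold pointwise_limit; destruct constructive_indefinite_description; auto.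
Qed.

Lemma pointwise_limit_uniform eps : 0 < eps -> exists N, forall n, (N <= n)%nat ->
  forall a z, Rabs (u' (f n a z) - u' (pointwise_limit a z)) <= eps.
Proof.
  intros heps; destruct (f_cauchy eps heps) as [N HN].
  exists N; intros n hn a z.
  apply (Un_cv_Rabs_le (fun m => u' (f m a z)) _ _ _ N); [apply pointwise_limitP|].
  intros m hm; left.
  eapply Rle_lt_trans; [apply in_C_rho_ge; apply f_in_C|now apply HN].
Qed.

Lemma pointwise_limit_in_C : in_C u' pointwise_limit.
Proof.
  split; [|split].
  - intros a1 a2 z h12.
    destruct (pointwise_limitP a1 z) as [[p1 _] l1], (pointwise_limitP a2 z) as [[p2 _] l2].
    apply (u'_le_inv u' u'' u'_deriv u''_neg); auto.
    refine (Rle_cv_lim _ l2 l1); intro n.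
    destruct (f_in_C n) as [hmono [hpos _]].
    apply (u'_nonincreasing u' u'' u'_deriv u''_neg); [apply (hpos a1 z)|now apply hmono].
  - intros a z; apply pointwise_limitP.
  - destruct (pointwise_limit_uniform 1 ltac:(lra)) as [N HN].
    destruct (f_in_C N) as [_ [_ [M HM]]].
    exists (1 + M); intros a z.
    specialize (HN N (le_n _) a z); specialize (HM a z); rewrite Rabs_minus_sym in HN.
    pose proof (Rabs_sub_triang (u' (pointwise_limit a z)) (u' (f N a z)) (u' (pval a))).
    lra.
Qed.

Lemma rho_cv_pointwise_limit eps : 0 < eps ->
  exists N, forall n, (N <= n)%nat -> rho u' (f n) pointwise_limit < eps.
Proof.
  intros heps; destruct (pointwise_limit_uniform (eps / 2) ltac:(lra)) as [N HN].
  exists N; intros n hn.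
  apply Rle_lt_trans with (eps / 2); [|lra].
  apply rho_le; [lra|now apply HN].
Qed.
End Cauchy_limit.

Theorem lemma4
  (beta Rr : R) (hbeta : 0 < beta) (hR : 0 < Rr)
  (u u' u'' : R -> R) (hu : Assumption1 u u' u'')
  (Z : Type) (y : Z -> R) (hy : forall z, 0 <= y z)
  (Ey : Z -> R) (* Ey z = E[y(z_{t+1}) | z_t = z] for the Markov process *)
  (hEy : exists B, forall z, Ey z <= B) :
  complete_metric_space (@in_C Z u') (@rho Z u').
Proof.
  destruct hu as [_ [u'_deriv [_ [_ [u''_neg [u'_blowup _]]]]]].
  split.
  - apply in_C_rho_metric, (u'_inj u' u''); assumption.
  - intros f f_in_C f_cauchy.
    exists (pointwise_limit Z u' u'' u'_deriv u''_neg u'_blowup f f_in_C f_cauchy).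
    split; [apply pointwise_limit_in_C|apply rho_cv_pointwise_limit].
Qed.
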